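(* For each $\delta\in(-1,1)$, the map $\Psi_\delta$ is continuous on $[0,1]^2$.
   Context: Fix a function $h:[0,\tfrac12)\to[0,\infty)$ which is weakly increasing, satisfies $h(r)=0$ for all $r\le\frac1{10}$, $h(r)\to\infty$ as $r\to\frac12$, and is thrice continuously differentiable with $(h'(r))^2=O((r+h(r))^3)$, $h''(r)h'(r)=O((r+h(r))^3)$, $h'''(r)=O((r+h(r))^2)$. Let $r_0\in(0,\frac12)$ be the unique solution of $2r_0h(r_0)+r_0^2=\frac14$, and define $\Theta(r)=\arccos\frac{h(r)}{h(r)+r}$ for $r\le r_0$ and $\Theta(r)=\arcsin\frac{1}{2(h(r)+r)}$ for $r>r_0$. The map $(r,\theta)\mapsto(x_1,x_2)$, $x_1=\frac12+(r+h(r))\sin(\theta\Theta(r))$, $x_2=(r+h(r))\cos(\theta\Theta(r))-h(r)$, is a bijection from $(0,\frac12)\times[-1,1]$ onto $[0,1]\times[0,\frac12)\setminus\{(\frac12,0)\}$; let $K$ denote its inverse. For $\delta\in(-1,1)$ and $r\in(0,\frac12)$, let $w_r(\theta)=1+h'(r)-h'(r)\cos(\theta\Theta(r))$ and let $g_r=g_{r,\delta}:[-1,1]\to[-1,1]$ be the unique increasing bijection with $(1+\delta)\int_{-1}^{\ell}w_r(\theta)\,d\theta=\int_{-1}^{g_r(\ell)}w_r(\theta)\,d\theta$ for $\ell\in[-1,0]$ and $(1-\delta)\int_{\ell}^{1}w_r(\theta)\,d\theta=\int_{g_r(\ell)}^{1}w_r(\theta)\,d\theta$ for $\ell\in[0,1]$.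 Define $\Psi_\delta:[0,1]^2\to[0,1]^2$ by: $\Psi_\delta(x)=K^{-1}(r,g_r(\theta))$ where $(r,\theta)=K(x)$, for $x\in[0,1]\times[0,\frac12)\setminus\{(\frac12,0)\}$; $\Psi_\delta(\frac12,0)=(\frac12,0)$; for $x_2>\frac12$, $\Psi_\delta(x_1,x_2)=(\Psi^1_\delta(x_1,1-x_2),\,1-\Psi^2_\delta(x_1,1-x_2))$ where $\Psi_\delta=(\Psi^1_\delta,\Psi^2_\delta)$; and on $x_2=\frac12$, $\Psi_\delta(x_1,\frac12)=((1+\delta)x_1,\frac12)$ for $x_1\le\frac12$ and $\Psi_\delta(x_1,\frac12)=(\frac{1+\delta}2+(1-\delta)(x_1-\frac12),\frac12)$ for $x_1\ge\frac12$. $\Psi_\delta$ is a bijection of $[0,1]^2$ fixing the boundary. *)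

From Stdlib Require Import Reals Lra ClassicalEpsilon.
Open Scope R_scope.

(* Riemann integral of f over [a,b] (value of RiemannInt for any
   integrability proof; 0 if f is not integrable -- never happens below). *)
Definition RInt (f : R -> R) (a b : R) : R :=
  epsilon (inhabits 0)
    (fun v => exists pr : Riemann_integrable f a b, RiemannInt pr = v).

Definition h_hyp (h h1 h2 h3 : R -> R) : Prop :=
  (forall r, 0 <= r < 1/2 -> 0 <= h r) /\
  (forall a b, 0 <= a <= b -> b < 1/2 -> h a <= h b) /\
  (forall r, 0 <= r <= 1/10 -> h r = 0) /\
  (forall M, exists e, 0 < e /\ forall r, 1/2 - e < r < 1/2 -> M < h r) /\
  (forall r, 0 < r < 1/2 ->
     derivable_pt_lim h r (h1 r) /\ derivable_pt_lim h1 r (h2 r) /\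
     derivable_pt_lim h2 r (h3 r) /\ continuity_pt h3 r) /\
  (exists C, forall r, 0 < r < 1/2 ->
     (h1 r)^2 <= C * (r + h r)^3 /\
     Rabs (h2 r * h1 r) <= C * (r + h r)^3 /\
     Rabs (h3 r) <= C * (r + h r)^2).

Definition r0 (h : R -> R) : R :=
  epsilon (inhabits 0)
    (fun r => 0 < r < 1/2 /\ 2 * r * h r + r ^ 2 = 1/4).

Definition Theta (h : R -> R) (r : R) : R :=
  if Rle_dec r (r0 h) then acos (h r / (h r + r))
  else asin (1 / (2 * (h r + r))).

Definition Kinv (h : R -> R) (p : R * R) : R * R :=
  let (r, th) := p in
  (1/2 + (r + h r) * sin (th * Theta h r),
   (r + h r) * cos (th * Theta h r) - h r).

Definition K (h : R -> R) (x : R * R) : R * R :=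
  epsilon (inhabits (0, 0))
    (fun p => 0 < fst p < 1/2 /\ -1 <= snd p <= 1 /\ Kinv h p = x).

Definition w (h h1 : R -> R) (r th : R) : R :=
  1 + h1 r - h1 r * cos (th * Theta h r).

Definition g (h h1 : R -> R) (delta r l : R) : R :=
  epsilon (inhabits 0)
    (fun y => -1 <= y <= 1 /\
      if Rle_dec l 0 then
        (1 + delta) * RInt (w h h1 r) (-1) l = RInt (w h h1 r) (-1) y
      else
        (1 - delta) * RInt (w h h1 r) l 1 = RInt (w h h1 r) y 1).

Definition Psi_low (h h1 : R -> R) (delta : R) (x : R * R) : R * R :=
  if Req_EM_T (fst x) (1/2) then
    (if Req_EM_T (snd x) 0 then (1/2, 0)
     else let p := K h x in Kinv h (fst p, g h h1 delta (fst p) (snd p)))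
  else let p := K h x in Kinv h (fst p, g h h1 delta (fst p) (snd p)).

Definition Psi (h h1 : R -> R) (delta : R) (x : R * R) : R * R :=
  let (x1, x2) := x in
  if Rlt_dec x2 (1/2) then Psi_low h h1 delta x
  else if Rlt_dec (1/2) x2 then
    let q := Psi_low h h1 delta (x1, 1 - x2) in (fst q, 1 - snd q)
  else if Rle_dec x1 (1/2) then ((1 + delta) * x1, 1/2)
  else ((1 + delta) / 2 + (1 - delta) * (x1 - 1/2), 1/2).

Definition in_square (x : R * R) : Prop :=
  0 <= fst x <= 1 /\ 0 <= snd x <= 1.

(* continuity of F restricted to D (max-norm on R^2, equivalent to Euclidean) *)
Definition continuous_on2 (F : R * R -> R * R) (D : R * R -> Prop) : Prop :=
  forall x, D x -> forall eps, 0 < eps -> exists d, 0 < d /\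
    forall y, D y -> Rabs (fst y - fst x) < d -> Rabs (snd y - snd x) < d ->
      Rabs (fst (F y) - fst (F x)) < eps /\ Rabs (snd (F y) - snd (F x)) < eps.

(* Away from the midline x2 = 1/2 and the point (1/2, 0), Psi_delta is a composition of
   continuous maps.  The coordinates (r, theta) = K(x) depend continuously on x because each
   is the unique crossing point of a strictly monotone continuous family (r of the circle
   equation, theta of the sine equation on the circle), and g_r(theta) is likewise the
   crossing point of the increasing primitive of w_r.  Near (1/2, 0) the circles have radius
   at most |x1 - 1/2| + x2 and h vanishes, so Psi_delta moves points by at most that much.
   Near the midline the radius rho = r + h(r) blows up and Theta(r) = O(1/rho); then the arc
   is nearly a horizontal segment, sin is nearly linear on it, and w_r is nearly constant
   because (h' Theta^2)^2 = O(1/rho) by h'^2 = O(rho^3).  Hence g_r is close to a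
   piecewise-linear map and Psi_delta is uniformly close to its definition on the midline. *)

From Stdlib Require Import Reals Lra Psatz Classical ClassicalEpsilon Ranalysis5.
From Coquelicot Require Import Hierarchy Derive AutoDerive.
Open Scope R_scope.

Lemma Rdiv_nonneg_pos a b : 0 <= a -> 0 < b -> 0 <= a / b.
Proof. intros; apply Rmult_le_pos; [auto|left; apply Rinv_0_lt_compat; auto]. Qed.

Lemma Rdiv_le_of_le_div a b rho : 0 < b -> 0 < rho -> a / b <= rho -> a / rho <= b.
Proof.
  intros Hb Hrho H.
  assert (A : a <= rho * b) by (replace a with (a / b * b) by (field; lra); apply Rmult_le_compat_r; lra).
  apply Rle_trans with (rho * b / rho); [|right; field; lra].
  apply Rmult_le_compat_r; [left; apply Rinv_0_lt_compat|]; auto.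
Qed.

Lemma Rmin_diff a b c d : Rabs (Rmin a b - Rmin c d) <= Rabs (a - c) + Rabs (b - d).
Proof.
  pose proof (Rle_abs (a - c)); pose proof (Rle_abs (b - d)).
  pose proof (Rabs_minus_sym a c); pose proof (Rabs_minus_sym b d).
  pose proof (Rle_abs (c - a)); pose proof (Rle_abs (d - b)).
  unfold Rmin; destruct (Rle_dec a b); destruct (Rle_dec c d); apply Rabs_le; lra.
Qed.

Definition near2 (D : R * R -> Prop) (p : R * R) (P : R * R -> Prop) : Prop :=
  exists d, 0 < d /\ forall q, D q ->
    Rabs (fst q - fst p) < d -> Rabs (snd q - snd p) < d -> P q.

Definition cont2 (D : R * R -> Prop) (f : R * R -> R) (p : R * R) : Prop :=
  forall eps, 0 < eps -> near2 D p (fun q => Rabs (f q - f p) < eps).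

Lemma near2_ball D p d : 0 < d ->
  near2 D p (fun q => Rabs (fst q - fst p) < d /\ Rabs (snd q - snd p) < d).
Proof. intros Hd; exists d; split; auto. Qed.

Lemma near2_and D p P Q : near2 D p P -> near2 D p Q -> near2 D p (fun q => P q /\ Q q).
Proof.
  intros [d1 [Hd1 H1]] [d2 [Hd2 H2]]. exists (Rmin d1 d2); split; [apply Rmin_pos; auto|].
  intros q Dq A B; pose proof (Rmin_l d1 d2); pose proof (Rmin_r d1 d2).
  split; [apply H1|apply H2]; auto; lra.
Qed.

Lemma near2_impl D p (P Q : R * R -> Prop) :
  (forall q, D q -> P q -> Q q) -> near2 D p P -> near2 D p Q.
Proof. intros HPQ [d [Hd HP]]; exists d; split; auto. Qed.

Lemma near2_trans D D' p P : near2 D p D' -> near2 D' p P -> near2 D p P.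
Proof.
  intros HD' [d [Hd HP]].
  apply (near2_impl D p (fun q => D' q /\ Rabs (fst q - fst p) < d /\ Rabs (snd q - snd p) < d)).
  - intros q _ [Dq [A B]]; auto.
  - apply near2_and; [exact HD'|apply near2_ball; exact Hd].
Qed.

Lemma near2_sub D D' p P : (forall q, D' q -> D q) -> near2 D p P -> near2 D' p P.
Proof. intros HD [d [Hd HP]]; exists d; split; auto. Qed.

Lemma cont2_sub D D' f p : (forall q, D' q -> D q) -> cont2 D f p -> cont2 D' f p.
Proof. intros HD Hf e He; apply (near2_sub D); auto. Qed.

Lemma cont2_local D D' f p : near2 D p D' -> cont2 D' f p -> cont2 D f p.
Proof. intros HD Hf e He; apply (near2_trans D D'); auto. Qed.

Lemma cont2_ext D f g p : (forall q, D q -> f q = g q) -> D p -> cont2 D f p -> cont2 D g p.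
Proof.
  intros Hfg Dp Hf e He. apply (near2_impl D p (fun q => Rabs (f q - f p) < e)); auto.
  intros q Dq; rewrite !Hfg; auto.
Qed.

Lemma cont2_const D c p : cont2 D (fun _ => c) p.
Proof.
  intros e He; exists 1; split; [lra|]; intros.
  rewrite Rminus_diag, Rabs_R0; exact He.
Qed.

Lemma cont2_fst D p : cont2 D fst p.
Proof. intros e He; exists e; split; auto. Qed.

Lemma cont2_snd D p : cont2 D snd p.
Proof. intros e He; exists e; split; auto. Qed.

Lemma cont2_comp2 D D' G f1 f2 p : (forall q, D q -> D' (f1 q, f2 q)) ->
  cont2 D' G (f1 p, f2 p) -> cont2 D f1 p -> cont2 D f2 p ->
  cont2 D (fun q => G (f1 q, f2 q)) p.
Proof.
  intros HD HG H1 H2 e He. destruct (HG e He) as [d [Hd HG']].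
  apply (near2_impl D p (fun q => Rabs (f1 q - f1 p) < d /\ Rabs (f2 q - f2 p) < d)).
  - intros q Dq [A B]; apply (HG' (f1 q, f2 q)); auto.
  - apply near2_and; auto.
Qed.

Lemma cont2_compose_fst D G f p :
  cont2 (fun _ => True) (fun q => G (fst q)) (f p, 0) -> cont2 D f p -> cont2 D (fun q => G (f q)) p.
Proof.
  intros HG Hf. exact (cont2_comp2 D (fun _ => True) _ f (fun _ => 0) p (fun _ _ => I) HG Hf (cont2_const D 0 p)).
Qed.

Lemma cont2_comp D g f p : continuity_pt g (f p) -> cont2 D f p -> cont2 D (fun q => g (f q)) p.
Proof.
  intros Hg Hf e He. destruct (Hg e He) as [d [Hd Hg']].
  apply (near2_impl D p (fun q => Rabs (f q - f p) < d)); [|apply Hf; auto].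
  intros q _ A. destruct (Req_dec (f q) (f p)) as [E|Ne].
  - rewrite E, Rminus_diag, Rabs_R0; exact He.
  - apply (Hg' (f q)); split; [split; [exact I|auto]|exact A].
Qed.

Lemma cont2_plus D f g p : cont2 D f p -> cont2 D g p -> cont2 D (fun q => f q + g q) p.
Proof.
  intros Hf Hg e He.
  apply (near2_impl D p (fun q => Rabs (f q - f p) < e/2 /\ Rabs (g q - g p) < e/2)).
  - intros q _ [A B]. replace (f q + g q - (f p + g p)) with ((f q - f p) + (g q - g p)) by ring.
    pose proof (Rabs_triang (f q - f p) (g q - g p)); lra.
  - apply near2_and; [apply Hf|apply Hg]; lra.
Qed.

Lemma cont2_opp D f p : cont2 D f p -> cont2 D (fun q => - f q) p.
Proof.
  intros Hf e He. apply (near2_impl D p (fun q => Rabs (f q - f p) < e)); [|auto].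
  intros q _ A. rewrite <- Rabs_Ropp. replace (- (- f q - - f p)) with (f q - f p) by ring; exact A.
Qed.

Lemma cont2_minus D f g p : cont2 D f p -> cont2 D g p -> cont2 D (fun q => f q - g q) p.
Proof. intros; apply cont2_plus; [|apply cont2_opp]; auto. Qed.

Lemma cont2_mult_fst_snd p : cont2 (fun _ => True) (fun q => fst q * snd q) p.
Proof.
  destruct p as [a b]; intros e He. set (M := Rabs a + Rabs b + 2).
  pose proof (Rabs_pos a); pose proof (Rabs_pos b).
  assert (HM : 0 < M) by (unfold M; lra).
  set (d := Rmin 1 (e / M)).
  assert (d1 : d <= 1) by apply Rmin_l.
  assert (dM : d * M <= e).
  { replace e with (e / M * M) by (field; lra).
    apply Rmult_le_compat_r; [lra|apply Rmin_r]. }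
  exists d; split; [apply Rmin_pos; [lra|apply Rdiv_lt_0_compat; auto]|].
  intros [x y] _ A B; simpl in *.
  replace (x * y - a * b) with ((x - a) * (y - b) + (x - a) * b + a * (y - b)) by ring.
  pose proof (Rabs_triang ((x - a) * (y - b) + (x - a) * b) (a * (y - b))).
  pose proof (Rabs_triang ((x - a) * (y - b)) ((x - a) * b)).
  rewrite !Rabs_mult in *.
  pose proof (Rabs_pos (x - a)); pose proof (Rabs_pos (y - b)).
  unfold M in dM. nra.
Qed.

Lemma cont2_mult D f g p : cont2 D f p -> cont2 D g p -> cont2 D (fun q => f q * g q) p.
Proof.
  intros Hf Hg.
  apply (cont2_comp2 D (fun _ => True) (fun q => fst q * snd q)); auto.
  apply cont2_mult_fst_snd.
Qed.

Lemma cont2_div D f g p : g p <> 0 -> cont2 D f p -> cont2 D g p -> cont2 D (fun q => f q / g q) p.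
Proof.
  intros Hn Hf Hg. apply cont2_mult; auto. apply (cont2_comp D Rinv g p); auto.
  apply continuity_pt_inv; auto. apply derivable_continuous_pt, derivable_pt_id.
Qed.

Lemma cont2_sin D f p : cont2 D f p -> cont2 D (fun q => sin (f q)) p.
Proof. intros; apply cont2_comp; auto; apply continuity_sin. Qed.

Lemma cont2_cos D f p : cont2 D f p -> cont2 D (fun q => cos (f q)) p.
Proof. intros; apply cont2_comp; auto; apply continuity_cos. Qed.

Lemma cont2_sqr D f p : cont2 D f p -> cont2 D (fun q => f q ^ 2) p.
Proof.
  intros; apply (cont2_comp D (fun x => x ^ 2)); auto.
  apply derivable_continuous_pt, derivable_pt_pow.
Qed.

Lemma cont2_min D f g p : cont2 D f p -> cont2 D g p -> cont2 D (fun q => Rmin (f q) (g q)) p.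
Proof.
  intros Hf Hg e He.
  apply (near2_impl D p (fun q => Rabs (f q - f p) < e/2 /\ Rabs (g q - g p) < e/2)).
  - intros q _ [A B]. pose proof (Rmin_diff (f q) (g q) (f p) (g p)); lra.
  - apply near2_and; [apply Hf|apply Hg]; lra.
Qed.

Lemma cont2_glue D F F1 F2 p :
  near2 D p (fun q => F q = F1 q \/ F q = F2 q) -> F1 p = F p -> F2 p = F p ->
  cont2 D F1 p -> cont2 D F2 p -> cont2 D F p.
Proof.
  intros Hq E1 E2 H1 H2 e He.
  apply (near2_impl D p (fun q => (F q = F1 q \/ F q = F2 q) /\
     (Rabs (F1 q - F1 p) < e /\ Rabs (F2 q - F2 p) < e))).
  - intros q _ [[-> | ->] [A B]]; [rewrite <- E1|rewrite <- E2]; auto.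
  - repeat apply near2_and; auto.
Qed.

Definition is_interval (I : R -> Prop) : Prop :=
  forall a b c, I a -> I c -> a <= b <= c -> I b.

Lemma is_interval_open a b : is_interval (fun t => a < t < b).
Proof. intros x y z X Z Y; lra. Qed.

Lemma is_interval_closed a b : is_interval (fun t => a <= t <= b).
Proof. intros x y z X Z Y; lra. Qed.

Definition crossing (D : R * R -> Prop) (I : R -> Prop) (F : R * R -> R -> R)
    (tau s : R * R -> R) : Prop :=
  forall q, D q -> I (s q) /\ F q (s q) = tau q /\
    forall t, I t -> (t < s q -> F q t < tau q) /\ (s q < t -> tau q < F q t).

Section Crossing.

Variables (D : R * R -> Prop) (I : R -> Prop) (F : R * R -> R -> R) (tau s : R * R -> R).

Hypotheses (HI : is_interval I) (Hs : crossing D I F tau s).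

Lemma crossing_upper p e : D p -> 0 < e ->
  (forall t, I t -> cont2 D (fun q => F q t) p) -> cont2 D tau p ->
  near2 D p (fun q => s q < s p + e).
Proof.
  intros Dp He HF Htau. set (t1 := s p + e).
  destruct (Hs p Dp) as [Isp _].
  destruct (classic (I t1)) as [It|Nt].
  - destruct (Hs p Dp) as [_ [_ Hp]].
    assert (gap : tau p < F p t1) by (apply (Hp t1 It); unfold t1; lra).
    apply (near2_impl D p (fun q => Rabs (F q t1 - F p t1) < (F p t1 - tau p) / 2 /\
                                     Rabs (tau q - tau p) < (F p t1 - tau p) / 2)).
    + intros q Dq [A B]. apply Rabs_def2 in A; apply Rabs_def2 in B.
      destruct (Hs q Dq) as [_ [Eq Hq]].
      destruct (Rtotal_order (s q) t1) as [lt|[eq|gt]]; auto.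
      * rewrite eq in Eq; lra.
      * pose proof (proj1 (Hq t1 It) gt); lra.
    + apply near2_and; [apply HF|apply Htau]; auto; lra.
  - exists 1; split; [lra|]. intros q Dq _ _.
    destruct (Rlt_le_dec (s q) t1) as [ok|bad]; auto.
    destruct (Hs q Dq) as [Isq _].
    exfalso; apply Nt, (HI (s p) t1 (s q)); auto; unfold t1 in *; lra.
Qed.

End Crossing.

Lemma crossing_opp D I F tau s :
  crossing D I F tau s ->
  crossing D (fun t => I (- t)) (fun q t => - F q (- t)) (fun q => - tau q) (fun q => - s q).
Proof.
  intros Hs q Dq. destruct (Hs q Dq) as [Isq [Eq Hq]].
  rewrite Ropp_involutive, Eq. split; [|split]; auto.
  intros t It. destruct (Hq (- t) It) as [A B]. split; intros; [apply Ropp_lt_contravar, B|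
    apply Ropp_lt_contravar, A]; lra.
Qed.

Lemma cont2_crossing D I F tau s p : is_interval I -> crossing D I F tau s -> D p ->
  (forall t, I t -> cont2 D (fun q => F q t) p) -> cont2 D tau p -> cont2 D s p.
Proof.
  intros HI Hs Dp HF Htau e He.
  (* The lower bound is the upper bound for the problem reflected by [t |-> -t]. *)
  assert (HI' : is_interval (fun t => I (- t))) by (intros a b c A C Hb; apply (HI (- c) _ (- a)); auto; lra).
  assert (Lo := crossing_upper D _ _ _ _ HI' (crossing_opp D I F tau s Hs) p e Dp He
    (fun t It => cont2_opp D _ p (HF (- t) It)) (cont2_opp D tau p Htau)).
  apply (near2_impl D p (fun q => s q < s p + e /\ - s q < - s p + e)).
  - intros q _ [A B]; apply Rabs_def1; lra.
  - apply near2_and; [apply (crossing_upper D I F tau s)|]; auto.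
Qed.

Lemma asin_nonneg x : 0 <= x <= 1 -> 0 <= asin x.
Proof.
  intros Hx. destruct (Rle_or_lt 0 (asin x)) as [ok|neg]; auto. exfalso.
  pose proof (asin_bound x). pose proof PI_RGT_0.
  assert (S : sin (asin x) < 0) by (apply sin_lt_0_var; lra).
  rewrite sin_asin in S by lra. lra.
Qed.

Lemma asin_pos x : 0 < x <= 1 -> 0 < asin x.
Proof.
  intros Hx. destruct (Rle_lt_or_eq_dec _ _ (asin_nonneg x ltac:(lra))) as [ok|eq]; auto.
  exfalso. assert (E : sin (asin x) = sin 0) by (rewrite <- eq; auto).
  rewrite sin_asin, sin_0 in E by lra. lra.
Qed.

Lemma asin_lt_PI2 x : 0 <= x < 1 -> asin x < PI/2.
Proof.
  intros Hx. destruct (Rle_lt_or_eq_dec _ _ (proj2 (asin_bound x))) as [ok|eq]; auto.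
  exfalso. assert (E : sin (asin x) = sin (PI/2)) by (rewrite eq; auto).
  rewrite sin_asin, sin_PI2 in E by lra. lra.
Qed.

Lemma sin_lipschitz x y : Rabs (sin x - sin y) <= Rabs (x - y).
Proof.
  destruct (MVT_abs sin cos y x) as [c [E _]].
  { intros; apply derivable_pt_lim_sin. }
  rewrite E. rewrite <- (Rmult_1_l (Rabs (x - y))) at 2.
  apply Rmult_le_compat_r; [apply Rabs_pos|]. pose proof (COS_bound c).
  apply Rabs_le; lra.
Qed.

Lemma sin_cubic_pos x : 0 <= x <= PI -> 0 <= x - sin x <= x ^ 3 / 6.
Proof.
  intros Hx. destruct (sin_bound x 0 (proj1 Hx) (proj2 Hx)) as [A _].
  unfold sin_approx, sin_term in A. simpl in A.
  split; [|lra].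
  destruct (Rle_lt_or_eq_dec _ _ (proj1 Hx)) as [lt|eq].
  - pose proof (sin_lt_x x lt); lra.
  - subst; rewrite sin_0; lra.
Qed.

Lemma sin_cubic x : Rabs x <= PI -> Rabs (sin x - x) <= Rabs x ^ 3 / 6.
Proof.
  intros Hx. destruct (Rle_or_lt 0 x).
  - rewrite (Rabs_right x) in * by lra. pose proof (sin_cubic_pos x ltac:(lra)).
    rewrite Rabs_left1 by lra. lra.
  - rewrite (Rabs_left x) in * by lra. pose proof (sin_cubic_pos (-x) ltac:(lra)) as S.
    rewrite sin_neg in S. rewrite Rabs_right by lra. lra.
Qed.

Lemma sin_scaled_cubic t T : Rabs t <= 1 -> 0 < T <= PI ->
  Rabs (sin (t * T) - t * sin T) <= T ^ 3 / 3.
Proof.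
  intros Ht HT.
  assert (HtT : Rabs (t * T) <= T) by (rewrite Rabs_mult, (Rabs_right T) by lra;
    pose proof (Rabs_pos t); nra).
  pose proof (sin_cubic (t * T) ltac:(lra)) as A1.
  destruct (sin_cubic_pos T ltac:(lra)) as [A2 A3].
  assert (A4 : Rabs (t * T) ^ 3 <= T ^ 3) by (apply pow_incr; split; [apply Rabs_pos|auto]).
  replace (sin (t * T) - t * sin T) with ((sin (t * T) - t * T) + t * (T - sin T)) by ring.
  eapply Rle_trans; [apply Rabs_triang|].
  rewrite Rabs_mult, (Rabs_right (T - sin T)) by lra.
  pose proof (Rabs_pos t). nra.
Qed.

Lemma cos_le_of_abs_le x y : Rabs x <= y <= PI -> cos y <= cos x.
Proof.
  intros Hxy. replace (cos x) with (cos (Rabs x)).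
  - destruct (Rle_lt_or_eq_dec _ _ (proj1 Hxy)) as [lt|eq]; [|rewrite eq; lra].
    left; apply cos_decreasing_1; pose proof (Rabs_pos x); lra.
  - unfold Rabs; destruct (Rcase_abs x); [apply cos_neg|reflexivity].
Qed.

Lemma RInt_FTC (f F : R -> R) a b :
  (forall x, derivable_pt_lim F x (f x)) -> continuity f -> RInt f a b = F b - F a.
Proof.
  intros HD Hc.
  set (dF := (fun x => exist (fun l => derivable_pt_abs F x l) (f x) (HD x)) : derivable F).
  set (CF := {| c1 := F; diff0 := dF; cont1 := Hc : continuity (derive F dF) |}).
  assert (pr : Riemann_integrable f a b).
  { destruct (Rle_dec a b).
    - apply continuity_implies_RiemannInt; auto.
    - apply RiemannInt_P1, continuity_implies_RiemannInt; [lra|auto]. }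
  assert (Ex : exists v, exists pr : Riemann_integrable f a b, RiemannInt pr = v)
    by (exists (RiemannInt pr), pr; reflexivity).
  unfold RInt. destruct (epsilon_spec (inhabits 0) _ Ex) as [pr' <-].
  rewrite (RiemannInt_P5 pr' pr). exact (@FTC_Riemann CF a b pr).
Qed.

(* For [B = h'(r)] and [T = Theta(r)], [Wprim B T] is the primitive of [w_r] vanishing at [-1]. *)
Definition Wprim (B T a : R) : R := (a + 1) * (1 + B) - B * (sin (a * T) + sin T) / T.

Section Wprim.

Variables B T : R.

Lemma Wprim_derive a : T <> 0 -> derivable_pt_lim (Wprim B T) a (1 + B - B * cos (a * T)).
Proof. intros HT. apply is_derive_Reals. unfold Wprim. auto_derive; [easy|field; auto]. Qed.

Lemma Wprim_continuity : T <> 0 -> continuity (Wprim B T).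
Proof. intros HT a. apply derivable_continuous_pt. eexists; apply Wprim_derive; auto. Qed.

Lemma Wprim_m1 : T <> 0 -> Wprim B T (-1) = 0.
Proof.
  intros HT; unfold Wprim. replace (-1 * T) with (- T) by ring.
  rewrite sin_neg. field; auto.
Qed.

Lemma Wprim_1 : T <> 0 -> Wprim B T 1 = 2 * Wprim B T 0.
Proof. intros HT; unfold Wprim. rewrite Rmult_1_l, Rmult_0_l, sin_0. field; auto. Qed.

Lemma Wprim_incr a b : 0 < T -> 0 <= B -> a <= b -> b - a <= Wprim B T b - Wprim B T a.
Proof.
  intros HT HB Hab. unfold Wprim.
  assert (S : sin (b * T) - sin (a * T) <= (b - a) * T).
  { pose proof (sin_lipschitz (b * T) (a * T)) as L. pose proof (Rle_abs (sin (b * T) - sin (a * T))).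
    rewrite (Rabs_right (b * T - a * T)) in L by nra. lra. }
  assert (0 <= (b - a) - (sin (b * T) - sin (a * T)) / T).
  { apply (Rmult_le_reg_r T); auto. rewrite Rmult_0_l. unfold Rdiv.
    rewrite Rmult_minus_distr_r, Rmult_assoc, Rinv_l by lra. lra. }
  replace ((b + 1) * (1 + B) - B * (sin (b * T) + sin T) / T - ((a + 1) * (1 + B) - B * (sin (a * T) + sin T) / T))
    with ((b - a) + B * ((b - a) - (sin (b * T) - sin (a * T)) / T)) by (field; lra).
  nra.
Qed.

Lemma Wprim_approx a : 0 < T <= PI -> 0 <= B -> Rabs a <= 1 ->
  Rabs (Wprim B T a - (a + 1)) <= B * T ^ 2 / 3.
Proof.
  intros HT HB Ha. unfold Wprim.
  replace ((a + 1) * (1 + B) - B * (sin (a * T) + sin T) / T - (a + 1))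
    with (B / T * ((a * T - sin (a * T)) + (T - sin T))) by (field; lra).
  assert (A1 : Rabs (a * T - sin (a * T)) <= T ^ 3 / 6).
  { rewrite Rabs_minus_sym. eapply Rle_trans; [apply sin_cubic|].
    - rewrite Rabs_mult, (Rabs_right T) by lra. pose proof (Rabs_pos a); nra.
    - rewrite Rabs_mult, (Rabs_right T) by lra. apply Rmult_le_compat_r; [lra|].
      rewrite Rpow_mult_distr. pose proof (Rabs_pos a).
      assert (Rabs a ^ 3 <= 1) by (rewrite <- (pow1 3); apply pow_incr; lra).
      assert (0 <= T ^ 3) by (apply pow_le; lra). nra. }
  destruct (sin_cubic_pos T ltac:(lra)) as [A2 A3].
  rewrite Rabs_mult, (Rabs_right (B / T)) by (apply Rle_ge, Rdiv_nonneg_pos; lra).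
  replace (B * T ^ 2 / 3) with (B / T * (T ^ 3 / 3)) by (field; lra).
  apply Rmult_le_compat_l; [apply Rdiv_nonneg_pos; lra|].
  eapply Rle_trans; [apply Rabs_triang|]. rewrite (Rabs_right (T - sin T)) by lra. lra.
Qed.

End Wprim.

(* [bend delta 0 1] is Psi_delta on the midline, and [g_r] is characterized by
   [Wr r (g_r l) = bend delta 0 (Wr r 1) (Wr r l)] (see [g_spec]). *)
Definition bend (delta a b v : R) : R := v + delta * Rmin (v - a) (b - v).

Lemma bend_diff delta a b a' b' v v' : Rabs delta <= 1 ->
  Rabs (bend delta a b v - bend delta a' b' v') <=
  Rabs (v - v') + Rabs ((v - a) - (v' - a')) + Rabs ((b - v) - (b' - v')).
Proof.
  intros Hd. unfold bend.
  pose proof (Rmin_diff (v - a) (b - v) (v' - a') (b' - v')) as M.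
  set (m := Rmin (v - a) (b - v) - Rmin (v' - a') (b' - v')) in M.
  replace (v + delta * Rmin (v - a) (b - v) - (v' + delta * Rmin (v' - a') (b' - v')))
    with ((v - v') + delta * m) by (unfold m; ring).
  eapply Rle_trans; [apply Rabs_triang|]. rewrite Rabs_mult.
  pose proof (Rabs_pos delta); pose proof (Rabs_pos m). nra.
Qed.

Lemma bend_lipschitz delta a b v v' : Rabs delta <= 1 ->
  Rabs (bend delta a b v - bend delta a b v') <= 3 * Rabs (v - v').
Proof.
  intros Hd. eapply Rle_trans; [apply bend_diff; auto|].
  replace (v - a - (v' - a)) with (v - v') by ring.
  replace (b - v - (b - v')) with (- (v - v')) by ring. rewrite Rabs_Ropp. lra.
Qed.

Lemma bend_affine delta a b c k v : 0 < k ->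
  bend delta (c + k * a) (c + k * b) (c + k * v) = c + k * bend delta a b v.
Proof.
  intros Hk. unfold bend, Rmin.
  destruct (Rle_dec (v - a) (b - v)); destruct (Rle_dec (c + k * v - (c + k * a)) (c + k * b - (c + k * v)));
    try ring; exfalso; nra.
Qed.

Lemma bend_range delta a b v : Rabs delta <= 1 -> a <= v <= b -> a <= bend delta a b v <= b.
Proof.
  intros Hd Hv. pose proof (Rle_abs delta). pose proof (Rle_abs (- delta)).
  rewrite Rabs_Ropp in *. unfold bend, Rmin.
  destruct (Rle_dec (v - a) (b - v)); split; nra.
Qed.

Lemma polar_angle_in_arc rho T u v : 0 < rho -> 0 < T <= PI / 2 -> Rabs u <= rho * sin T ->
  0 <= v -> u ^ 2 + v ^ 2 = rho ^ 2 ->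
  exists th, -1 <= th <= 1 /\ rho * sin (th * T) = u /\ rho * cos (th * T) = v.
Proof.
  intros Hrho HT Hu Hv Huv.
  assert (Hx : Rabs (u / rho) <= sin T).
  { unfold Rdiv; rewrite Rabs_mult, (Rabs_right (/ rho)) by (left; apply Rinv_0_lt_compat; auto).
    apply (Rmult_le_reg_r rho); auto. rewrite Rmult_assoc, Rinv_l by lra. lra. }
  pose proof PI_RGT_0. pose proof (SIN_bound T). pose proof (Rle_abs (u / rho)). pose proof (Rle_abs (- (u / rho))).
  rewrite Rabs_Ropp in *.
  set (ph := asin (u / rho)).
  assert (Sph : sin ph = u / rho) by (apply sin_asin; lra).
  pose proof (asin_bound (u / rho)) as Bph; fold ph in Bph.
  assert (Hph : - T <= ph <= T).
  { split; apply Rnot_lt_le; intros Hlt.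
    - pose proof (sin_increasing_1 ph (- T) ltac:(lra) ltac:(lra) ltac:(lra) ltac:(lra) Hlt) as S.
      rewrite sin_neg in S; lra.
    - pose proof (sin_increasing_1 T ph ltac:(lra) ltac:(lra) ltac:(lra) ltac:(lra) Hlt); lra. }
  exists (ph / T). replace (ph / T * T) with ph by (field; lra). split; [|split].
  - split; [apply (Rmult_le_reg_r T)|apply (Rmult_le_reg_r T)]; try lra;
      unfold Rdiv; rewrite Rmult_assoc, Rinv_l; lra.
  - rewrite Sph; field; lra.
  - unfold ph. rewrite cos_asin by lra.
    replace (1 - (u / rho)²) with ((v / rho) ^ 2)
      by (unfold Rsqr; field_simplify_eq; lra).
    rewrite sqrt_pow2 by (apply Rdiv_nonneg_pos; lra). field; lra.
Qed.

(* For r > r0 the arc of radius [rho = r + h r] and half-angle [T = Theta r] ends on the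
   vertical sides of the square, i.e. [sin T = 1 / (2 rho)]. *)
Section ArcOfHalfChord.

Variables rho T : R.

Hypotheses (HT : 0 < T <= PI / 2) (Hsin : sin T = 1 / (2 * rho)).

Lemma arc_angle_le : 1/2 <= rho -> T <= 3 / (2 * rho).
Proof.
  intros Hrho. pose proof PI_4. destruct (sin_cubic_pos T ltac:(lra)) as [_ A].
  assert (T * T <= 2 * 2) by (apply Rmult_le_compat; lra).
  assert (T ^ 3 / 6 <= 2 * T / 3) by (simpl; nra).
  apply (Rmult_le_reg_r (2 * rho)); [lra|].
  replace (3 / (2 * rho) * (2 * rho)) with 3 by (field; lra).
  assert (E : sin T * (2 * rho) = 1) by (rewrite Hsin; field; lra).
  apply Rle_trans with (3 * sin T * (2 * rho)); [apply Rmult_le_compat_r; lra|].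
  rewrite Rmult_assoc, E; lra.
Qed.

Lemma rho_sin_approx t : 0 < rho -> Rabs t <= 1 -> Rabs (rho * sin (t * T) - t / 2) <= rho * T ^ 3 / 3.
Proof.
  intros Hrho Ht. pose proof PI_RGT_0.
  replace (rho * sin (t * T) - t / 2) with (rho * (sin (t * T) - t * sin T)) by (rewrite Hsin; field; lra).
  rewrite Rabs_mult, (Rabs_right rho) by lra. unfold Rdiv; rewrite Rmult_assoc.
  apply Rmult_le_compat_l; [lra|]. apply sin_scaled_cubic; auto; lra.
Qed.

Lemma rho_cos_lower t : 1/2 <= rho -> Rabs t <= 1 -> rho - 1 / (4 * rho) <= rho * cos (t * T).
Proof.
  intros Hrho Ht. pose proof PI_RGT_0.
  assert (HtT : Rabs (t * T) <= T) by (rewrite Rabs_mult, (Rabs_right T) by lra;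
    pose proof (Rabs_pos t); nra).
  assert (cT : cos T <= cos (t * T)) by (apply cos_le_of_abs_le; lra).
  assert (c0 : 0 <= cos T) by (apply cos_ge_0; lra).
  assert (c2 : (rho * cos T) ^ 2 = rho ^ 2 - 1/4).
  { assert (C2 : cos T ^ 2 = 1 - sin T ^ 2) by (pose proof (sin2_cos2 T); unfold Rsqr in *; simpl; lra).
    rewrite Rpow_mult_distr, C2, Hsin. field; lra. }
  apply Rle_trans with (rho * cos T); [|apply Rmult_le_compat_l; lra].
  apply Rsqr_incr_0_var; [|apply Rmult_le_pos; lra].
  unfold Rsqr. replace ((rho * cos T) * (rho * cos T)) with ((rho * cos T) ^ 2) by ring.
  rewrite c2. replace ((rho - 1 / (4 * rho)) * (rho - 1 / (4 * rho))) with
    (rho ^ 2 - 1/2 + / (16 * rho ^ 2)) by (field; lra).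
  assert (/ (16 * rho ^ 2) <= / 4) by (apply Rinv_le_contravar; nra). lra.
Qed.

End ArcOfHalfChord.

Lemma arc_cubic_error rho T : 1 <= rho -> 0 < T <= 3 / (2 * rho) -> rho * T ^ 3 <= 27 / (8 * rho).
Proof.
  intros Hrho HT. apply Rle_trans with (rho * (3 / (2 * rho)) ^ 3).
  - apply Rmult_le_compat_l; [lra|]. apply pow_incr; lra.
  - replace (rho * (3 / (2 * rho)) ^ 3) with (27 / (8 * rho) * / rho) by (field; lra).
    rewrite <- (Rmult_1_r (27 / (8 * rho))) at 2. apply Rmult_le_compat_l.
    + apply Rdiv_nonneg_pos; lra.
    + rewrite <- Rinv_1. apply Rinv_le_contravar; lra.
Qed.

Lemma arc_quadratic_error rho T B C : 0 < rho -> 0 <= B -> B ^ 2 <= C * rho ^ 3 ->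
  0 < T <= 3 / (2 * rho) -> (B * T ^ 2 / 3) ^ 2 <= 9 * C / (16 * rho).
Proof.
  intros Hrho HB HBC HT.
  replace ((B * T ^ 2 / 3) ^ 2) with (B ^ 2 * T ^ 4 / 9) by field.
  apply Rle_trans with (C * rho ^ 3 * (3 / (2 * rho)) ^ 4 / 9).
  - apply Rmult_le_compat_r; [lra|]. apply Rmult_le_compat; try apply pow_le; try lra.
    apply pow_incr; lra.
  - right; field; lra.
Qed.

Section StandingAssumptions.

Variables h h1 h2 h3 : R -> R.

Hypothesis Hh : h_hyp h h1 h2 h3.

Variable delta : R.

Hypothesis Hdelta : -1 < delta < 1.

Lemma h_nonneg r : 0 <= r < 1/2 -> 0 <= h r.
Proof. apply Hh. Qed.

Lemma h_le a b : 0 <= a <= b -> b < 1/2 -> h a <= h b.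
Proof. apply Hh. Qed.

Lemma h_zero r : 0 <= r <= 1/10 -> h r = 0.
Proof. apply Hh. Qed.

Lemma h_unbounded M : exists e, 0 < e /\ forall r, 1/2 - e < r < 1/2 -> M < h r.
Proof. apply Hh. Qed.

Lemma h_derivable r : 0 < r < 1/2 -> derivable_pt_lim h r (h1 r).
Proof. intros Hr; apply Hh; auto. Qed.

Lemma h1_derivable r : 0 < r < 1/2 -> derivable_pt_lim h1 r (h2 r).
Proof. intros Hr; apply Hh; auto. Qed.

Lemma h_continuity_pt r : 0 < r < 1/2 -> continuity_pt h r.
Proof. intros Hr. apply derivable_continuous_pt. exists (h1 r). apply h_derivable; auto. Qed.

Lemma h1_continuity_pt r : 0 < r < 1/2 -> continuity_pt h1 r.
Proof. intros Hr. apply derivable_continuous_pt. exists (h2 r). apply h1_derivable; auto. Qed.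

Lemma h1_nonneg r : 0 < r < 1/2 -> 0 <= h1 r.
Proof.
  intros Hr. apply Rnot_lt_le; intros Hneg.
  destruct (h_derivable r Hr (- h1 r / 2)) as [d Hd]; [lra|].
  set (k := Rmin (d / 2) ((1/2 - r) / 2)).
  assert (k0 : 0 < k) by (unfold k; destruct d; simpl; apply Rmin_pos; lra).
  assert (kd : k < d) by (unfold k; destruct d as [d dp]; simpl; pose proof (Rmin_l (d/2) ((1/2 - r)/2)); lra).
  assert (kr : k <= (1/2 - r) / 2) by apply Rmin_r.
  pose proof (Hd k (Rgt_not_eq _ _ k0) ltac:(rewrite Rabs_right; lra)) as A.
  assert (h r <= h (r + k)) by (apply h_le; lra).
  assert (0 <= (h (r + k) - h r) / k) by (apply Rdiv_nonneg_pos; lra).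
  apply Rabs_def2 in A. lra.
Qed.

Lemma h1_sq_bound : exists C, 0 <= C /\ forall r, 0 < r < 1/2 -> h1 r ^ 2 <= C * (r + h r) ^ 3.
Proof.
  destruct Hh as [_ [_ [_ [_ [_ [C HC]]]]]]. exists (Rabs C); split; [apply Rabs_pos|].
  intros r Hr. eapply Rle_trans; [apply (HC r Hr)|].
  apply Rmult_le_compat_r; [|apply RRle_abs].
  pose proof (h_nonneg r ltac:(lra)). apply pow_le; lra.
Qed.

Lemma r0_spec : 0 < r0 h < 1/2 /\ 2 * r0 h * h (r0 h) + r0 h ^ 2 = 1/4.
Proof.
  unfold r0. apply epsilon_spec.
  destruct (h_unbounded 1) as [e [He Hr]].
  set (b := Rmax (1/4) (1/2 - e/2)).
  assert (b1 : 1/4 <= b) by apply Rmax_l.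
  assert (b2 : 1/2 - e/2 <= b) by apply Rmax_r.
  assert (b3 : b < 1/2) by (unfold b; apply Rmax_lub_lt; lra).
  assert (hb : 1 < h b) by (apply Hr; lra).
  destruct (IVT_interv (fun r => 2 * r * h r + r ^ 2 - 1/4) (1/10) b) as [z [Hz Ez]].
  - intros a Ha. apply continuity_pt_minus; [|apply continuity_pt_const; intros ? ?; auto].
    apply continuity_pt_plus.
    + apply continuity_pt_mult; [|apply h_continuity_pt; lra].
      apply continuity_pt_scal, derivable_continuous_pt, derivable_pt_id.
    + apply derivable_continuous_pt, derivable_pt_pow.
  - lra.
  - rewrite h_zero by lra. lra.
  - nra.
  - exists z. split; [lra|]. lra.
Qed.

Lemma r0_bounds : 0 < r0 h < 1/2.
Proof. apply r0_spec. Qed.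

Lemma h_r0_pos : 0 < h (r0 h).
Proof.
  destruct r0_spec as [B E].
  destruct (Rle_lt_or_eq_dec _ _ (h_nonneg (r0 h) ltac:(lra))) as [lt|eq]; auto.
  rewrite <- eq in E; nra.
Qed.

Lemma half_lt_radius r : r0 h <= r < 1/2 -> 1/2 < r + h r.
Proof.
  intros Hr. destruct r0_spec as [B E]. pose proof h_r0_pos.
  assert (h (r0 h) <= h r) by (apply h_le; lra). nra.
Qed.

Lemma Theta_le_r0 r : r <= r0 h -> Theta h r = acos (h r / (h r + r)).
Proof. intros; unfold Theta; destruct (Rle_dec r (r0 h)); [auto|lra]. Qed.

Lemma Theta_gt_r0 r : r0 h < r -> Theta h r = asin (1 / (2 * (h r + r))).
Proof. intros; unfold Theta; destruct (Rle_dec r (r0 h)); [lra|auto]. Qed.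

Lemma cos_ratio_range r : 0 < r < 1/2 -> 0 <= h r / (h r + r) < 1.
Proof.
  intros Hr. pose proof (h_nonneg r ltac:(lra)).
  split; [apply Rdiv_nonneg_pos; lra|].
  apply (Rmult_lt_reg_r (h r + r)); [lra|]. unfold Rdiv.
  rewrite Rmult_assoc, Rinv_l by lra. lra.
Qed.

Lemma sin_ratio_range r : r0 h <= r < 1/2 -> 0 < 1 / (2 * (h r + r)) < 1.
Proof.
  intros Hr. pose proof (half_lt_radius r Hr). split; [apply Rdiv_lt_0_compat; lra|].
  apply (Rmult_lt_reg_r (2 * (h r + r))); [lra|]. unfold Rdiv.
  rewrite Rmult_assoc, Rinv_l by lra. lra.
Qed.

Lemma Theta_bounds r : 0 < r < 1/2 -> 0 < Theta h r <= PI/2.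
Proof.
  intros Hr. destruct (Rle_or_lt r (r0 h)) as [le|gt].
  - rewrite Theta_le_r0 by auto. pose proof (cos_ratio_range r Hr) as C.
    rewrite acos_asin by lra. pose proof (asin_lt_PI2 _ C).
    pose proof (asin_nonneg (h r / (h r + r)) ltac:(lra)). lra.
  - rewrite Theta_gt_r0 by auto. pose proof (sin_ratio_range r ltac:(lra)).
    pose proof (asin_pos (1 / (2 * (h r + r))) ltac:(lra)).
    pose proof (asin_bound (1 / (2 * (h r + r)))). lra.
Qed.

Lemma cos_Theta_le_r0 r : 0 < r < 1/2 -> r <= r0 h -> cos (Theta h r) = h r / (h r + r).
Proof.
  intros Hr Hr0. rewrite Theta_le_r0 by auto. pose proof (cos_ratio_range r Hr).
  apply cos_acos; lra.
Qed.

Lemma sin_Theta_gt_r0 r : r0 h < r < 1/2 -> sin (Theta h r) = 1 / (2 * (r + h r)).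
Proof.
  intros. rewrite Theta_gt_r0 by lra. pose proof (sin_ratio_range r ltac:(lra)).
  rewrite sin_asin by lra. f_equal; ring.
Qed.

(* The two formulas for [Theta] agree at [r0]: this is what the defining equation of [r0] says. *)
Lemma Theta_formulas_r0 :
  acos (h (r0 h) / (h (r0 h) + r0 h)) = asin (1 / (2 * (h (r0 h) + r0 h))).
Proof.
  destruct r0_spec as [B E]. pose proof h_r0_pos.
  pose proof (cos_ratio_range (r0 h) B) as C.
  set (c := h (r0 h) / (h (r0 h) + r0 h)) in *.
  assert (Ha : 0 <= acos c <= PI/2).
  { rewrite acos_asin by lra. pose proof (asin_lt_PI2 _ C). pose proof (asin_nonneg c ltac:(lra)). lra. }
  rewrite <- (asin_sin (acos c)) by (pose proof PI_RGT_0; lra).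
  f_equal. rewrite sin_acos by lra.
  replace (1 - c²) with ((1 / (2 * (h (r0 h) + r0 h))) ^ 2).
  - apply sqrt_pow2. apply Rlt_le, Rdiv_lt_0_compat; lra.
  - unfold c, Rsqr. field_simplify_eq; lra.
Qed.

Lemma cont2_h D p : 0 < fst p < 1/2 -> cont2 D (fun q => h (fst q)) p.
Proof. intros; apply cont2_comp; [apply h_continuity_pt; auto|apply cont2_fst]. Qed.

Lemma cont2_h1 D p : 0 < fst p < 1/2 -> cont2 D (fun q => h1 (fst q)) p.
Proof. intros; apply cont2_comp; [apply h1_continuity_pt; auto|apply cont2_fst]. Qed.

Lemma cont2_Theta_le_r0 D p : 0 < fst p < 1/2 ->
  cont2 D (fun q => acos (h (fst q) / (h (fst q) + fst q))) p.
Proof.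
  intros Hp. pose proof (cos_ratio_range _ Hp). pose proof (h_nonneg (fst p) ltac:(lra)).
  apply cont2_comp; [apply derivable_continuous_pt, derivable_pt_acos; lra|].
  apply cont2_div; [lra|apply cont2_h; auto|apply cont2_plus; [apply cont2_h; auto|apply cont2_fst]].
Qed.

Lemma cont2_Theta_gt_r0 D p : r0 h <= fst p < 1/2 ->
  cont2 D (fun q => asin (1 / (2 * (h (fst q) + fst q)))) p.
Proof.
  intros Hp. pose proof (half_lt_radius _ Hp). pose proof (sin_ratio_range _ Hp). pose proof r0_bounds.
  apply cont2_comp; [apply derivable_continuous_pt, derivable_pt_asin; lra|].
  apply cont2_div; [cbv beta; lra|apply cont2_const|]. apply cont2_mult; [apply cont2_const|].
  apply cont2_plus; [apply cont2_h; lra|apply cont2_fst].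
Qed.

Lemma cont2_Theta D p : 0 < fst p < 1/2 -> cont2 D (fun q => Theta h (fst q)) p.
Proof.
  intros Hp. pose proof r0_bounds.
  destruct (Rtotal_order (fst p) (r0 h)) as [lt|[eq|gt]].
  - apply (cont2_glue D _ (fun q => acos (h (fst q) / (h (fst q) + fst q)))
                          (fun q => acos (h (fst q) / (h (fst q) + fst q))));
      try (rewrite Theta_le_r0 by lra); auto using cont2_Theta_le_r0.
    apply (near2_impl D p (fun q => Rabs (fst q - fst p) < r0 h - fst p /\ Rabs (snd q - snd p) < r0 h - fst p)).
    + intros q _ [A _]. left. apply Theta_le_r0. apply Rabs_def2 in A; lra.
    + apply near2_ball; lra.
  - apply (cont2_glue D _ (fun q => acos (h (fst q) / (h (fst q) + fst q)))
                          (fun q => asin (1 / (2 * (h (fst q) + fst q))))).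
    + exists 1; split; [lra|]. intros q _ _ _. destruct (Rle_or_lt (fst q) (r0 h)).
      * left; apply Theta_le_r0; auto.
      * right; apply Theta_gt_r0; auto.
    + rewrite Theta_le_r0; auto; lra.
    + rewrite Theta_le_r0 by lra. rewrite eq. symmetry; apply Theta_formulas_r0.
    + apply cont2_Theta_le_r0; auto.
    + apply cont2_Theta_gt_r0; lra.
  - apply (cont2_glue D _ (fun q => asin (1 / (2 * (h (fst q) + fst q))))
                          (fun q => asin (1 / (2 * (h (fst q) + fst q)))));
      try (rewrite Theta_gt_r0 by lra); auto; try (apply cont2_Theta_gt_r0; lra).
    apply (near2_impl D p (fun q => Rabs (fst q - fst p) < fst p - r0 h /\ Rabs (snd q - snd p) < fst p - r0 h)).
    + intros q _ [A _]. left. apply Theta_gt_r0. apply Rabs_def2 in A; lra.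
    + apply near2_ball; lra.
Qed.

Definition Wr (r : R) : R -> R := Wprim (h1 r) (Theta h r).

Lemma Theta_neq0 r : 0 < r < 1/2 -> Theta h r <> 0.
Proof. intros Hr; pose proof (Theta_bounds r Hr); lra. Qed.

Lemma Wr_incr r a b : 0 < r < 1/2 -> a <= b -> b - a <= Wr r b - Wr r a.
Proof.
  intros Hr Hab. apply Wprim_incr; auto.
  - apply (Theta_bounds r Hr).
  - apply (h1_nonneg r Hr).
Qed.

Lemma RInt_w r a b : 0 < r < 1/2 -> RInt (w h h1 r) a b = Wr r b - Wr r a.
Proof.
  intros Hr. pose proof (Theta_neq0 r Hr).
  apply RInt_FTC; [intros; apply Wprim_derive; auto|].
  intros x. unfold w. reg.
Qed.

Lemma g_spec r l : 0 < r < 1/2 -> -1 <= l <= 1 ->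
  -1 <= g h h1 delta r l <= 1 /\ Wr r (g h h1 delta r l) = bend delta 0 (Wr r 1) (Wr r l).
Proof.
  intros Hr Hl. pose proof (Theta_neq0 r Hr) as HT.
  assert (W0 : Wr r (-1) = 0) by (apply Wprim_m1; auto).
  assert (W1 : Wr r 1 = 2 * Wr r 0) by (apply Wprim_1; auto).
  assert (Hd : Rabs delta <= 1) by (apply Rabs_le; lra).
  assert (spec_iff : forall y, (if Rle_dec l 0 then
        (1 + delta) * RInt (w h h1 r) (-1) l = RInt (w h h1 r) (-1) y
      else (1 - delta) * RInt (w h h1 r) l 1 = RInt (w h h1 r) y 1)
      <-> Wr r y = bend delta 0 (Wr r 1) (Wr r l)).
  { intros y. rewrite !RInt_w, W0 by auto. unfold bend. destruct (Rle_dec l 0) as [Hl0|Hl0].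
    - pose proof (Wr_incr r l 0 Hr Hl0). rewrite Rmin_left by lra. split; intros; lra.
    - pose proof (Wr_incr r 0 l Hr ltac:(lra)). rewrite Rmin_right by lra. split; intros; lra. }
  assert (Ex : exists y, -1 <= y <= 1 /\ Wr r y = bend delta 0 (Wr r 1) (Wr r l)).
  { pose proof (Wr_incr r (-1) l Hr ltac:(lra)). pose proof (Wr_incr r l 1 Hr ltac:(lra)).
    pose proof (bend_range delta 0 (Wr r 1) (Wr r l) Hd ltac:(lra)).
    destruct (f_interv_is_interv (Wr r) (-1) 1 (bend delta 0 (Wr r 1) (Wr r l))) as [y Hy]; [lra|lra| |eauto].
    intros; apply Wprim_continuity; auto. }
  unfold g. match goal with |- context [epsilon ?i ?P] =>
    assert (HP : P (epsilon i P)) by (apply epsilon_spec; destruct Ex as [y [Hy Ey]];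
      exists y; split; [|apply spec_iff]; auto) end.
  destruct HP as [Hg Eg]. split; [|apply spec_iff]; auto.
Qed.

Definition polar_box (q : R * R) : Prop := 0 < fst q < 1/2 /\ -1 <= snd q <= 1.

Lemma cont2_Wr D f p : 0 < fst p < 1/2 -> cont2 D f p -> cont2 D (fun q => Wr (fst q) (f q)) p.
Proof.
  intros Hp Hf. pose proof (cont2_Theta D p Hp) as HT.
  pose proof (cont2_h1 D p Hp) as HB.
  unfold Wr, Wprim. apply cont2_minus.
  - apply cont2_mult; apply cont2_plus; auto using cont2_const.
  - apply cont2_div; [apply Theta_neq0; auto|apply cont2_mult; auto|auto].
    apply cont2_plus; apply cont2_sin; auto using cont2_mult.
Qed.

Lemma cont2_g p : polar_box p -> cont2 polar_box (fun q => g h h1 delta (fst q) (snd q)) p.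
Proof.
  intros Dp. destruct Dp as [Hp1 Hp2].
  apply (cont2_crossing polar_box (fun t => -1 <= t <= 1) (fun q t => Wr (fst q) t)
           (fun q => bend delta 0 (Wr (fst q) 1) (Wr (fst q) (snd q)))).
  - apply is_interval_closed.
  - intros q [Hq1 Hq2]. destruct (g_spec (fst q) (snd q) Hq1 Hq2) as [Hg Eg].
    split; [|split]; auto. intros t _. rewrite <- Eg.
    split; intros Ht; [pose proof (Wr_incr (fst q) _ _ Hq1 (Rlt_le _ _ Ht))
                      |pose proof (Wr_incr (fst q) _ _ Hq1 (Rlt_le _ _ Ht))]; lra.
  - split; auto.
  - intros t _. apply cont2_Wr, cont2_const; auto.
  - unfold bend. apply cont2_plus; [apply cont2_Wr, cont2_snd; auto|].
    apply cont2_mult; [apply cont2_const|].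
    apply cont2_min; [apply cont2_minus; [apply cont2_Wr, cont2_snd; auto|apply cont2_const]|].
    apply cont2_minus; apply cont2_Wr; auto using cont2_const, cont2_snd.
Qed.

Definition half_square (q : R * R) : Prop := 0 <= fst q <= 1 /\ 0 <= snd q < 1/2.

Definition half_square_punct (q : R * R) : Prop := half_square q /\ ~ (fst q = 1/2 /\ snd q = 0).

(* [y] lies on the level set [r = t] of [K], the circle of centre (1/2, -h t) and radius
   t + h t, iff [circle_gap t y = 0]. *)
Definition circle_gap (t : R) (y : R * R) : R :=
  (t + h t) ^ 2 - (snd y + h t) ^ 2 - (fst y - 1/2) ^ 2.

Lemma circle_gap_factor t y :
  circle_gap t y = (t - snd y) * (t + snd y + 2 * h t) - (fst y - 1/2) ^ 2.
Proof. unfold circle_gap; ring. Qed.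

Lemma circle_gap_neg_below y t : half_square y -> 0 < t < snd y -> circle_gap t y < 0.
Proof.
  intros [_ Hy] Ht. rewrite circle_gap_factor. pose proof (h_nonneg t ltac:(lra)).
  pose proof (pow2_ge_0 (fst y - 1/2)).
  assert (0 < (snd y - t) * (t + snd y + 2 * h t)) by (apply Rmult_lt_0_compat; lra). nra.
Qed.

Lemma circle_gap_incr y s t : 0 <= snd y <= s -> s < t < 1/2 -> circle_gap s y < circle_gap t y.
Proof.
  intros Hs Ht. rewrite !circle_gap_factor.
  pose proof (h_nonneg s ltac:(lra)).
  assert (h s <= h t) by (apply h_le; lra).
  nra.
Qed.

Lemma circle_gap_neg_small y : half_square_punct y -> exists a, 0 < a <= 1/20 /\ circle_gap a y < 0.
Proof.
  intros [[Y1 Y2] Yn]. set (u := fst y - 1/2).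
  assert (Hpos : 0 < snd y ^ 2 + u ^ 2).
  { destruct (Req_dec u 0) as [u0|u0].
    - assert (snd y <> 0) by (intros E; apply Yn; unfold u in u0; split; lra).
      pose proof (pow_lt (snd y) 2 ltac:(lra)); nra.
    - pose proof (Rsqr_pos_lt u u0); unfold Rsqr in *; nra. }
  set (a := Rmin (1/20) (sqrt ((snd y ^ 2 + u ^ 2) / 2))).
  assert (a0 : 0 < a) by (apply Rmin_pos; [lra|apply sqrt_lt_R0; lra]).
  assert (a1 : a <= 1/20) by apply Rmin_l.
  assert (a2 : a ^ 2 <= (snd y ^ 2 + u ^ 2) / 2).
  { rewrite <- (pow2_sqrt ((snd y ^ 2 + u ^ 2) / 2)) by lra.
    apply pow_incr; split; [lra|apply Rmin_r]. }
  exists a; split; [lra|]. unfold circle_gap. rewrite (h_zero a) by lra. fold u. nra.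
Qed.

Lemma circle_gap_pos_large y : half_square y -> exists b, 1/4 <= b < 1/2 /\ 0 < circle_gap b y.
Proof.
  intros [Y1 Y2]. set (m := (1/2 - snd y) / 2).
  destruct (h_unbounded (1 / (8 * m))) as [e [He Hinf]].
  set (b := Rmax ((snd y + 1/2) / 2) (1/2 - e/2)).
  assert (b1 : (snd y + 1/2) / 2 <= b) by apply Rmax_l.
  assert (b2 : 1/2 - e/2 <= b) by apply Rmax_r.
  assert (b3 : b < 1/2) by (apply Rmax_lub_lt; lra).
  assert (hb : 1 / (8 * m) < h b) by (apply Hinf; lra).
  assert (hb' : 1/4 < 2 * m * h b).
  { apply (Rmult_lt_compat_l (2 * m)) in hb; [|unfold m; lra].
    replace (2 * m * (1 / (8 * m))) with (1/4) in hb by (field; unfold m; lra). lra. }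
  exists b; split; [lra|]. rewrite circle_gap_factor.
  assert (m <= b - snd y) by (unfold m; lra).
  pose proof (h_nonneg b ltac:(lra)). nra.
Qed.

Lemma circle_gap_root y : half_square_punct y -> exists z, 0 < z < 1/2 /\ circle_gap z y = 0.
Proof.
  intros Dy. destruct (circle_gap_neg_small y Dy) as [a [Ha Ga]].
  destruct (circle_gap_pos_large y (proj1 Dy)) as [b [Hb Gb]].
  destruct (IVT_interv (fun t => circle_gap t y) a b) as [z [Hz Ez]]; auto; [|lra|].
  - intros t Ht. unfold circle_gap.
    assert (continuity_pt h t) by (apply h_continuity_pt; lra). reg.
  - exists z; split; [lra|exact Ez].
Qed.

Lemma arc_contains y z : half_square y -> 0 < z < 1/2 -> circle_gap z y = 0 ->
  Rabs (fst y - 1/2) <= (z + h z) * sin (Theta h z).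
Proof.
  intros [Hx Hy] Hz Ez. unfold circle_gap in Ez.
  pose proof (h_nonneg z ltac:(lra)).
  pose proof (Theta_bounds z Hz). pose proof PI_RGT_0.
  assert (Hs : 0 <= sin (Theta h z)) by (apply sin_ge_0; lra).
  destruct (Rle_or_lt z (r0 h)) as [le|gt].
  - rewrite <- (Rabs_right ((z + h z) * sin (Theta h z))) by (apply Rle_ge, Rmult_le_pos; lra).
    apply Rsqr_le_abs_0. pose proof (sin2_cos2 (Theta h z)) as SC.
    rewrite (cos_Theta_le_r0 z Hz le) in SC.
    assert (E : ((z + h z) * sin (Theta h z)) ^ 2 = (z + h z) ^ 2 - h z ^ 2).
    { rewrite Rpow_mult_distr. replace (sin (Theta h z) ^ 2) with (1 - (h z / (h z + z))²) by (unfold Rsqr in *; lra).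
      unfold Rsqr; field; lra. }
    unfold Rsqr; nra.
  - rewrite (sin_Theta_gt_r0 z ltac:(lra)).
    replace ((z + h z) * (1 / (2 * (z + h z)))) with (1/2) by (field; lra).
    apply Rabs_le; lra.
Qed.

Lemma K_exists y : half_square_punct y ->
  exists p, 0 < fst p < 1/2 /\ -1 <= snd p <= 1 /\ Kinv h p = y.
Proof.
  intros Dy. destruct (circle_gap_root y Dy) as [z [Hz Ez]].
  pose proof (h_nonneg z ltac:(lra)).
  pose proof (Theta_bounds z Hz).
  pose proof (arc_contains y z (proj1 Dy) Hz Ez) as Harc.
  destruct Dy as [[Y1 Y2] _].
  destruct (polar_angle_in_arc (z + h z) (Theta h z) (fst y - 1/2) (snd y + h z))
    as [th [Hth [E1 E2]]]; try lra.
  { unfold circle_gap in Ez; lra. }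
  exists (z, th); split; [auto|split; [auto|]].
  destruct y as [y1 y2]; simpl in *. unfold Kinv. f_equal; lra.
Qed.

Definition rK (y : R * R) : R := fst (K h y).

Definition tK (y : R * R) : R := snd (K h y).

Lemma K_spec y : half_square_punct y ->
  0 < rK y < 1/2 /\ -1 <= tK y <= 1 /\
  (rK y + h (rK y)) * sin (tK y * Theta h (rK y)) = fst y - 1/2 /\
  (rK y + h (rK y)) * cos (tK y * Theta h (rK y)) = snd y + h (rK y).
Proof.
  intros Dy. destruct (epsilon_spec (inhabits (0, 0)) _ (K_exists y Dy)) as [A [B E]].
  fold (K h y) in A, B, E. unfold rK, tK. destruct (K h y) as [r t]. destruct y as [y1 y2].
  unfold Kinv in E; injection E; simpl in *; intros; split; [|split; [|split]]; auto; lra.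
Qed.

Lemma rK_range y : half_square_punct y -> 0 < rK y < 1/2.
Proof. apply K_spec. Qed.

Lemma tK_range y : half_square_punct y -> -1 <= tK y <= 1.
Proof. apply K_spec. Qed.

Lemma circle_gap_rK y : half_square_punct y -> circle_gap (rK y) y = 0.
Proof.
  intros Dy. destruct (K_spec y Dy) as [_ [_ [E1 E2]]]. unfold circle_gap.
  rewrite <- E1, <- E2. pose proof (sin2_cos2 (tK y * Theta h (rK y))) as SC. unfold Rsqr in SC.
  rewrite <- (Rmult_1_r ((rK y + h (rK y)) ^ 2)), <- SC. ring.
Qed.

Lemma rK_ge y : half_square_punct y -> snd y <= rK y.
Proof.
  intros Dy. apply Rnot_lt_le; intros lt.
  pose proof (circle_gap_neg_below y (rK y) (proj1 Dy) (conj (proj1 (rK_range y Dy)) lt)) as N.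
  rewrite circle_gap_rK in N; auto; lra.
Qed.

Lemma rK_crossing :
  crossing half_square_punct (fun t => 0 < t < 1/2) (fun q t => circle_gap t q) (fun _ => 0) rK.
Proof.
  intros y Dy. pose proof (rK_range y Dy). pose proof (rK_ge y Dy). pose proof (circle_gap_rK y Dy).
  pose proof (proj2 (proj1 Dy)).
  split; [auto|split; [auto|]]. intros t Ht; split; intros Hlt.
  - destruct (Rlt_or_le t (snd y)).
    + apply circle_gap_neg_below; [apply Dy|lra].
    + pose proof (circle_gap_incr y t (rK y) ltac:(lra) ltac:(lra)); lra.
  - pose proof (circle_gap_incr y (rK y) t ltac:(lra) ltac:(lra)); lra.
Qed.

Lemma cont2_rK p : half_square_punct p -> cont2 half_square_punct rK p.
Proof.
  intros Dp. apply (cont2_crossing _ _ _ _ _ p (is_interval_open 0 (1/2)) rK_crossing Dp).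
  - intros t _. unfold circle_gap. repeat apply cont2_minus; auto using cont2_const;
      apply cont2_sqr; auto using cont2_minus, cont2_plus, cont2_fst, cont2_snd, cont2_const.
  - apply cont2_const.
Qed.

Lemma tK_crossing : crossing half_square_punct (fun t => -1 <= t <= 1)
  (fun q t => (rK q + h (rK q)) * sin (t * Theta h (rK q))) (fun q => fst q - 1/2) tK.
Proof.
  intros y Dy. destruct (K_spec y Dy) as [Hr [Ht [E1 _]]].
  pose proof (h_nonneg (rK y) ltac:(lra)).
  pose proof (Theta_bounds (rK y) Hr).
  split; [auto|split; [auto|]]. intros t It. rewrite <- E1.
  split; intros Hlt; apply Rmult_lt_compat_l; try lra; apply sin_increasing_1; nra.
Qed.

Lemma cont2_tK p : half_square_punct p -> cont2 half_square_punct tK p.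
Proof.
  intros Dp. apply (cont2_crossing _ _ _ _ _ p (is_interval_closed (-1) 1) tK_crossing Dp).
  - intros t _.
    apply (cont2_compose_fst _ (fun r => (r + h r) * sin (t * Theta h r))); [|apply cont2_rK; auto].
    pose proof (rK_range p Dp).
    apply cont2_mult; [apply cont2_plus; [apply cont2_fst|apply cont2_h; auto]|].
    apply cont2_sin, cont2_mult; [apply cont2_const|apply cont2_Theta; auto].
  - apply cont2_minus; [apply cont2_fst|apply cont2_const].
Qed.

Definition gK (y : R * R) : R := g h h1 delta (rK y) (tK y).

Lemma Psi_low_punct y : half_square_punct y -> Psi_low h h1 delta y = Kinv h (rK y, gK y).
Proof.
  intros [_ Yn]. unfold Psi_low, gK, rK, tK.
  destruct (Req_EM_T (fst y) (1/2)); [destruct (Req_EM_T (snd y) 0)|]; auto.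
  exfalso; auto.
Qed.

Lemma Psi_low_singular : Psi_low h h1 delta (1/2, 0) = (1/2, 0).
Proof.
  unfold Psi_low; simpl.
  destruct (Req_EM_T (1/2) (1/2)); [destruct (Req_EM_T 0 0)|]; auto; lra.
Qed.

Lemma cont2_h_Theta_rK p : half_square_punct p ->
  cont2 half_square_punct (fun q => h (rK q)) p /\ cont2 half_square_punct (fun q => Theta h (rK q)) p.
Proof.
  intros Dp. pose proof (rK_range p Dp). pose proof (cont2_rK p Dp).
  split; apply cont2_compose_fst; auto; [apply cont2_h|apply cont2_Theta]; auto.
Qed.

Lemma cont2_Psi_low_punct p : half_square_punct p ->
  cont2 half_square_punct (fun q => fst (Psi_low h h1 delta q)) p /\
  cont2 half_square_punct (fun q => snd (Psi_low h h1 delta q)) p.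
Proof.
  intros Dp. pose proof (rK_range p Dp).
  assert (HrK := cont2_rK p Dp).
  destruct (cont2_h_Theta_rK p Dp) as [HhK HTK].
  assert (HgK : cont2 half_square_punct gK p).
  { apply (cont2_comp2 half_square_punct polar_box (fun q => g h h1 delta (fst q) (snd q)));
      [intros q Dq; split; simpl; [apply rK_range|apply tK_range]; auto
      | |auto|apply cont2_tK; auto].
    apply cont2_g. split; simpl; [auto|apply tK_range; auto]. }
  split.
  - apply (cont2_ext half_square_punct (fun q => fst (Kinv h (rK q, gK q))));
      [intros q Dq; rewrite Psi_low_punct; auto|auto|unfold Kinv].
    apply cont2_plus; [apply cont2_const|].
    apply cont2_mult; [apply cont2_plus; auto|apply cont2_sin, cont2_mult; auto].
  - apply (cont2_ext half_square_punct (fun q => snd (Kinv h (rK q, gK q))));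
      [intros q Dq; rewrite Psi_low_punct; auto|auto|unfold Kinv].
    apply cont2_minus; auto.
    apply cont2_mult; [apply cont2_plus; auto|apply cont2_cos, cont2_mult; auto].
Qed.

(* The circles of radius at most 1/10 are centred at (1/2, 0), since h vanishes there. *)
Lemma rK_small q : half_square_punct q -> Rabs (fst q - 1/2) < 1/30 -> snd q < 1/30 ->
  h (rK q) = 0 /\ rK q <= Rabs (fst q - 1/2) + snd q.
Proof.
  intros Dq Hu Hy. pose proof (rK_range q Dq). pose proof (circle_gap_rK q Dq) as E.
  destruct Dq as [[Q1 Q2] _]. pose proof (Rabs_pos (fst q - 1/2)).
  assert (Hu2 : (fst q - 1/2) ^ 2 = Rabs (fst q - 1/2) ^ 2) by (rewrite <- pow2_abs; auto).
  assert (Hr : rK q <= 1/15).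
  { apply Rnot_lt_le; intros lt.
    pose proof (circle_gap_incr q (1/15) (rK q) ltac:(lra) ltac:(lra)) as G.
    rewrite E in G. unfold circle_gap in G. rewrite (h_zero (1/15)) in G by lra. nra. }
  assert (Hz : h (rK q) = 0) by (apply h_zero; lra).
  split; auto. unfold circle_gap in E. rewrite Hz in E.
  apply Rsqr_incr_0_var; [unfold Rsqr; nra|lra].
Qed.

Lemma Psi_low_near_singular q : half_square q -> Rabs (fst q - 1/2) < 1/30 -> snd q < 1/30 ->
  Rabs (fst (Psi_low h h1 delta q) - 1/2) <= Rabs (fst q - 1/2) + snd q /\
  Rabs (snd (Psi_low h h1 delta q)) <= Rabs (fst q - 1/2) + snd q.
Proof.
  intros Dq Hu Hy. pose proof (Rabs_pos (fst q - 1/2)). pose proof (proj2 Dq).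
  destruct (classic (fst q = 1/2 /\ snd q = 0)) as [[E1 E2]|Nq].
  - destruct q as [q1 q2]; simpl in *; subst. rewrite Psi_low_singular; simpl.
    rewrite Rminus_diag, Rabs_R0; lra.
  - assert (Dq' : half_square_punct q) by (split; auto).
    destruct (rK_small q Dq' Hu Hy) as [Hz Hr]. pose proof (rK_range q Dq').
    rewrite Psi_low_punct by auto. unfold Kinv; simpl. rewrite Hz.
    pose proof (SIN_bound (gK q * Theta h (rK q))). pose proof (COS_bound (gK q * Theta h (rK q))).
    split; apply Rabs_le; split; nra.
Qed.

Lemma cont2_Psi_low_singular :
  cont2 half_square (fun q => fst (Psi_low h h1 delta q)) (1/2, 0) /\
  cont2 half_square (fun q => snd (Psi_low h h1 delta q)) (1/2, 0).
Proof.
  split; intros e He; rewrite Psi_low_singular; simpl;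
    exists (Rmin (1/30) (e/2)); (split; [apply Rmin_pos; lra|]);
    intros q Dq A B; simpl in A, B; pose proof (Rmin_l (1/30) (e/2)); pose proof (Rmin_r (1/30) (e/2));
    pose proof (proj2 Dq); rewrite ?Rminus_0_r, Rabs_right in B by lra;
    destruct (Psi_low_near_singular q Dq ltac:(lra) ltac:(lra)); rewrite ?Rminus_0_r; lra.
Qed.

Lemma near2_half_square_punct p : half_square p -> ~ (fst p = 1/2 /\ snd p = 0) -> near2 half_square p half_square_punct.
Proof.
  intros Dp Np. destruct (Req_dec (fst p) (1/2)) as [E|E].
  - assert (0 < snd p) by (destruct Dp; destruct (Req_dec (snd p) 0); [tauto|lra]).
    apply (near2_impl half_square p (fun q => Rabs (fst q - fst p) < snd p /\ Rabs (snd q - snd p) < snd p)).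
    + intros q Dq [_ B]; split; auto; intros [_ Z]. rewrite Z in B.
      rewrite Rminus_0_l, Rabs_Ropp, Rabs_right in B by lra; lra.
    + apply near2_ball; auto.
  - apply (near2_impl half_square p (fun q => Rabs (fst q - fst p) < Rabs (fst p - 1/2) /\
                                         Rabs (snd q - snd p) < Rabs (fst p - 1/2))).
    + intros q Dq [A _]; split; auto; intros [Z _]. rewrite Z, Rabs_minus_sym in A; lra.
    + apply near2_ball, Rabs_pos_lt; lra.
Qed.

Lemma cont2_Psi_low p : half_square p ->
  cont2 half_square (fun q => fst (Psi_low h h1 delta q)) p /\
  cont2 half_square (fun q => snd (Psi_low h h1 delta q)) p.
Proof.
  intros Dp. destruct (classic (fst p = 1/2 /\ snd p = 0)) as [[E1 E2]|Np].
  - destruct p as [p1 p2]; simpl in *; subst. apply cont2_Psi_low_singular.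
  - destruct (cont2_Psi_low_punct p (conj Dp Np)) as [C1 C2].
    split; apply (cont2_local half_square half_square_punct); auto; apply near2_half_square_punct; auto.
Qed.

Lemma g_near_bend r th : r0 h < r < 1/2 -> -1 <= th <= 1 ->
  Rabs (g h h1 delta r th - bend delta (-1) 1 th) <= 5 * (h1 r * Theta h r ^ 2 / 3).
Proof.
  intros Hr Hth. pose proof r0_bounds.
  assert (Hr' : 0 < r < 1/2) by lra.
  destruct (g_spec r th Hr' Hth) as [Hg Eg].
  set (E := h1 r * Theta h r ^ 2 / 3).
  assert (approx : forall x, -1 <= x <= 1 -> Rabs (Wr r x - (x + 1)) <= E).
  { intros x Hx. pose proof (Theta_bounds r Hr'). pose proof PI_RGT_0.
    apply Wprim_approx; [lra|apply (h1_nonneg r Hr')|apply Rabs_le; lra]. }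
  pose proof (approx _ Hg) as Ag. pose proof (approx _ Hth) as At. pose proof (approx 1 ltac:(lra)) as A1.
  assert (Hd : Rabs delta <= 1) by (apply Rabs_le; lra).
  pose proof (bend_diff delta 0 (Wr r 1) 0 2 (Wr r th) (th + 1) Hd) as Bd.
  replace (bend delta (-1) 1 th) with (bend delta 0 2 (th + 1) - 1)
    by (unfold bend; replace (th + 1 - 0) with (th - -1) by ring;
        replace (2 - (th + 1)) with (1 - th) by ring; ring).
  replace (g h h1 delta r th - (bend delta 0 2 (th + 1) - 1)) with
    (- (Wr r (g h h1 delta r th) - (g h h1 delta r th + 1))
     + (bend delta 0 (Wr r 1) (Wr r th) - bend delta 0 2 (th + 1))) by (rewrite Eg; ring).
  eapply Rle_trans; [apply Rabs_triang|]. rewrite Rabs_Ropp.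
  replace (Wr r th - 0 - (th + 1 - 0)) with (Wr r th - (th + 1)) in Bd by ring.
  replace (Wr r 1 - Wr r th - (2 - (th + 1))) with
    ((Wr r 1 - (1 + 1)) - (Wr r th - (th + 1))) in Bd by ring.
  pose proof (Rabs_triang (Wr r 1 - (1 + 1)) (- (Wr r th - (th + 1)))) as Tr.
  rewrite Rabs_Ropp in Tr. replace (Wr r 1 - (1 + 1) + - (Wr r th - (th + 1))) with
    (Wr r 1 - (1 + 1) - (Wr r th - (th + 1))) in Tr by ring. lra.
Qed.

Lemma Psi_low_fst_near_midline y : half_square_punct y -> r0 h < rK y ->
  Rabs (fst (Psi_low h h1 delta y) - bend delta 0 1 (fst y)) <=
  4/3 * ((rK y + h (rK y)) * Theta h (rK y) ^ 3) + 5/2 * (h1 (rK y) * Theta h (rK y) ^ 2 / 3).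
Proof.
  intros Dy Hr. destruct (K_spec y Dy) as [Hr' [Ht [E1 _]]].
  pose proof (Theta_bounds _ Hr') as HT.
  pose proof (half_lt_radius (rK y) ltac:(lra)) as Hrho.
  pose proof (sin_Theta_gt_r0 _ (conj Hr (proj2 Hr'))) as Hsin.
  destruct (g_spec _ _ Hr' Ht) as [Hg _].
  pose proof (g_near_bend _ _ (conj Hr (proj2 Hr')) Ht) as D2.
  rewrite Psi_low_punct by auto. unfold Kinv, gK; simpl.
  set (r := rK y) in *. set (th := tK y) in *. set (gv := g h h1 delta r th) in *.
  set (rho := r + h r) in *. set (T := Theta h r) in *.
  pose proof (rho_sin_approx rho T HT Hsin gv ltac:(lra) ltac:(apply Rabs_le; lra)) as D1.
  pose proof (rho_sin_approx rho T HT Hsin th ltac:(lra) ltac:(apply Rabs_le; lra)) as D3.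
  assert (Hd : Rabs delta <= 1) by (apply Rabs_le; lra).
  pose proof (bend_lipschitz delta 0 1 (1/2 + 1/2 * th) (fst y) Hd) as L.
  pose proof (bend_affine delta (-1) 1 (1/2) (1/2) th ltac:(lra)) as Aff.
  replace (1/2 + 1/2 * -1) with 0 in Aff by lra. replace (1/2 + 1/2 * 1) with 1 in Aff by lra.
  replace (1/2 + 1/2 * th - fst y) with (- (rho * sin (th * T) - th / 2)) in L by lra.
  rewrite Rabs_Ropp in L.
  replace (1/2 + rho * sin (gv * T) - bend delta 0 1 (fst y)) with
    ((rho * sin (gv * T) - gv / 2) + (gv - bend delta (-1) 1 th) / 2
     + (bend delta 0 1 (1/2 + 1/2 * th) - bend delta 0 1 (fst y))) by (rewrite Aff; field).
  assert (Half : Rabs ((gv - bend delta (-1) 1 th) / 2) = Rabs (gv - bend delta (-1) 1 th) / 2)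
    by (unfold Rdiv; rewrite Rabs_mult, (Rabs_right (/ 2)) by lra; reflexivity).
  pose proof (Rabs_triang (rho * sin (gv * T) - gv / 2) ((gv - bend delta (-1) 1 th) / 2)).
  pose proof (Rabs_triang ((rho * sin (gv * T) - gv / 2) + (gv - bend delta (-1) 1 th) / 2)
    (bend delta 0 1 (1/2 + 1/2 * th) - bend delta 0 1 (fst y))).
  lra.
Qed.

Lemma Psi_low_snd_near_midline y : half_square_punct y -> r0 h < rK y ->
  rK y - 1 / (4 * (rK y + h (rK y))) <= snd (Psi_low h h1 delta y) <= rK y.
Proof.
  intros Dy Hr. destruct (K_spec y Dy) as [Hr' [Ht _]].
  pose proof (Theta_bounds _ Hr') as HT.
  pose proof (half_lt_radius (rK y) ltac:(lra)) as Hrho.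
  pose proof (sin_Theta_gt_r0 _ (conj Hr (proj2 Hr'))) as Hsin.
  destruct (g_spec _ _ Hr' Ht) as [Hg _].
  rewrite Psi_low_punct by auto. unfold Kinv, gK; simpl.
  set (r := rK y) in *. set (gv := g h h1 delta r (tK y)) in *.
  pose proof (rho_cos_lower (r + h r) (Theta h r) HT Hsin gv ltac:(lra) ltac:(apply Rabs_le; lra)).
  pose proof (COS_bound (gv * Theta h r)). split; nra.
Qed.

(* From [T <= 3 / (2 rho)] and [h'^2 <= C rho^3]: [rho T^3 = O(1/rho)] and
   [(h' T^2)^2 = O(1/rho)]; [M] makes both small. *)
Lemma midline_error_small eta : 0 < eta -> exists M, 1 <= M /\ forall r, r0 h < r < 1/2 ->
  M <= r + h r ->
  4/3 * ((r + h r) * Theta h r ^ 3) + 5/2 * (h1 r * Theta h r ^ 2 / 3) <= eta /\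
  1 / (4 * (r + h r)) <= eta.
Proof.
  intros He. destruct h1_sq_bound as [C [C0 HC]].
  assert (Ce : 0 <= 225 * C / (16 * eta ^ 2)) by (apply Rdiv_nonneg_pos; [lra|nra]).
  assert (e9 : 0 < 9 / eta) by (apply Rdiv_lt_0_compat; lra).
  exists (1 + 9 / eta + 225 * C / (16 * eta ^ 2)); split; [lra|]. intros r Hr HM.
  pose proof r0_bounds. assert (Hr' : 0 < r < 1/2) by lra.
  pose proof (Theta_bounds r Hr') as HT.
  pose proof (arc_angle_le _ _ HT (sin_Theta_gt_r0 r Hr) ltac:(lra)) as HT'.
  pose proof (arc_cubic_error (r + h r) (Theta h r) ltac:(lra) ltac:(lra)) as E3.
  pose proof (arc_quadratic_error (r + h r) (Theta h r) (h1 r) C ltac:(lra) (h1_nonneg r Hr')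
    (HC r Hr') ltac:(lra)) as E2.
  assert (9 / (r + h r) <= eta) by (apply Rdiv_le_of_le_div; lra).
  assert (9 * C / (16 * (r + h r)) <= (eta / 5) ^ 2).
  { replace (9 * C / (16 * (r + h r))) with (9 * C / 16 / (r + h r)) by (field; lra).
    apply Rdiv_le_of_le_div; [apply pow_lt; lra|lra|].
    replace (9 * C / 16 / (eta / 5) ^ 2) with (225 * C / (16 * eta ^ 2)) by (field; lra). lra. }
  assert (h1 r * Theta h r ^ 2 / 3 <= eta / 5).
  { apply Rsqr_incr_0_var; [unfold Rsqr; simpl in *; lra|lra]. }
  split.
  - assert (27 / (8 * (r + h r)) = 3 / 8 * (9 / (r + h r))) by (field; lra). lra.
  - assert (1 / (4 * (r + h r)) = 1 / 36 * (9 / (r + h r))) by (field; lra). lra.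
Qed.

Lemma Psi_low_near_midline eta : 0 < eta -> exists d, 0 < d /\ forall y, half_square y -> 1/2 - d < snd y ->
  Rabs (fst (Psi_low h h1 delta y) - bend delta 0 1 (fst y)) <= eta /\
  Rabs (snd (Psi_low h h1 delta y) - 1/2) <= eta.
Proof.
  intros He. destruct (midline_error_small (eta / 2) ltac:(lra)) as [M [M1 HM]].
  destruct (h_unbounded M) as [e [He' Hinf]].
  pose proof r0_bounds.
  set (d := Rmin e (Rmin (eta / 2) (1/2 - r0 h))).
  assert (d1 : d <= e) by apply Rmin_l.
  assert (d2 : d <= eta / 2) by (eapply Rle_trans; [apply Rmin_r|apply Rmin_l]).
  assert (d3 : d <= 1/2 - r0 h) by (eapply Rle_trans; [apply Rmin_r|apply Rmin_r]).
  exists d; split; [repeat apply Rmin_pos; lra|]. intros y Dy Hy.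
  assert (Dy' : half_square_punct y) by (split; [auto|intros [_ E0]; lra]).
  pose proof (rK_range y Dy'). pose proof (rK_ge y Dy').
  assert (Hr : r0 h < rK y) by lra.
  assert (M < h (rK y)) by (apply Hinf; lra).
  destruct (HM (rK y) ltac:(lra) ltac:(lra)) as [B1 B2].
  pose proof (Psi_low_fst_near_midline y Dy' Hr).
  pose proof (Psi_low_snd_near_midline y Dy' Hr).
  split; [lra|]. apply Rabs_le. destruct Dy. lra.
Qed.

Lemma Psi_lower y1 y2 : y2 < 1/2 -> Psi h h1 delta (y1, y2) = Psi_low h h1 delta (y1, y2).
Proof. intros; unfold Psi. destruct (Rlt_dec y2 (1/2)); [auto|lra]. Qed.

Lemma Psi_upper y1 y2 : 1/2 < y2 -> Psi h h1 delta (y1, y2) =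
  (fst (Psi_low h h1 delta (y1, 1 - y2)), 1 - snd (Psi_low h h1 delta (y1, 1 - y2))).
Proof.
  intros; unfold Psi. destruct (Rlt_dec y2 (1/2)); [lra|].
  destruct (Rlt_dec (1/2) y2); [auto|lra].
Qed.

Lemma Psi_midline y1 : Psi h h1 delta (y1, 1/2) = (bend delta 0 1 y1, 1/2).
Proof.
  unfold Psi, bend. destruct (Rlt_dec (1/2) (1/2)); [lra|]. destruct (Rlt_dec (1/2) (1/2)); [lra|].
  destruct (Rle_dec y1 (1/2)); f_equal; unfold Rmin; destruct (Rle_dec (y1 - 0) (1 - y1)); lra.
Qed.

Lemma cont2_Psi_lower x : in_square x -> snd x < 1/2 ->
  cont2 in_square (fun q => fst (Psi h h1 delta q)) x /\
  cont2 in_square (fun q => snd (Psi h h1 delta q)) x.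
Proof.
  intros Sx Hx. set (D := fun q => in_square q /\ snd q < 1/2).
  assert (HD : near2 in_square x D).
  { apply (near2_impl _ _ (fun q => Rabs (fst q - fst x) < 1/2 - snd x /\ Rabs (snd q - snd x) < 1/2 - snd x)).
    - intros q Dq [_ B]. split; auto. apply Rabs_def2 in B; lra.
    - apply near2_ball; lra. }
  assert (DDh : forall q, D q -> half_square q) by (intros q [[Q1 Q2] Q3]; split; lra).
  assert (Eq : forall q, D q -> Psi h h1 delta q = Psi_low h h1 delta q)
    by (intros [q1 q2] [_ Q]; apply Psi_lower; auto).
  destruct (cont2_Psi_low x (DDh x (conj Sx Hx))) as [C1 C2].
  split; apply (cont2_local in_square D); auto.
  - apply (cont2_ext D (fun q => fst (Psi_low h h1 delta q))); [intros; rewrite Eq; auto|split; auto|].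
    apply (cont2_sub half_square); auto.
  - apply (cont2_ext D (fun q => snd (Psi_low h h1 delta q))); [intros; rewrite Eq; auto|split; auto|].
    apply (cont2_sub half_square); auto.
Qed.

Lemma cont2_Psi_upper x : in_square x -> 1/2 < snd x ->
  cont2 in_square (fun q => fst (Psi h h1 delta q)) x /\
  cont2 in_square (fun q => snd (Psi h h1 delta q)) x.
Proof.
  intros Sx Hx. set (D := fun q => in_square q /\ 1/2 < snd q).
  assert (HD : near2 in_square x D).
  { apply (near2_impl _ _ (fun q => Rabs (fst q - fst x) < snd x - 1/2 /\ Rabs (snd q - snd x) < snd x - 1/2)).
    - intros q Dq [_ B]. split; auto. apply Rabs_def2 in B; lra.
    - apply near2_ball; lra. }
  assert (DDh : forall q, D q -> half_square (fst q, 1 - snd q)) by (intros q [[Q1 Q2] Q3]; split; simpl; lra).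
  assert (Eq : forall q, D q -> Psi h h1 delta q = (fst (Psi_low h h1 delta (fst q, 1 - snd q)),
                                                    1 - snd (Psi_low h h1 delta (fst q, 1 - snd q))))
    by (intros [q1 q2] [_ Q]; apply Psi_upper; auto).
  destruct (cont2_Psi_low _ (DDh x (conj Sx Hx))) as [C1 C2].
  assert (Hrefl : cont2 D (fun q => 1 - snd q) x) by (apply cont2_minus; [apply cont2_const|apply cont2_snd]).
  split; apply (cont2_local in_square D); auto.
  - apply (cont2_ext D (fun q => fst (Psi_low h h1 delta (fst q, 1 - snd q))));
      [intros; rewrite Eq; auto|split; auto|].
    apply (cont2_comp2 D half_square (fun q => fst (Psi_low h h1 delta q))); auto using cont2_fst.
  - apply (cont2_ext D (fun q => 1 - snd (Psi_low h h1 delta (fst q, 1 - snd q))));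
      [intros; rewrite Eq; auto|split; auto|].
    apply cont2_minus; [apply cont2_const|].
    apply (cont2_comp2 D half_square (fun q => snd (Psi_low h h1 delta q))); auto using cont2_fst.
Qed.

Lemma Psi_near_midline eta : 0 < eta -> exists d, 0 < d /\ forall y, in_square y ->
  Rabs (snd y - 1/2) < d ->
  Rabs (fst (Psi h h1 delta y) - bend delta 0 1 (fst y)) <= eta /\
  Rabs (snd (Psi h h1 delta y) - 1/2) <= eta.
Proof.
  intros He. destruct (Psi_low_near_midline eta He) as [d [Hd NL]].
  exists d; split; auto. intros [y1 y2] [Y1 Y2] Hy; cbn [fst snd] in *. apply Rabs_def2 in Hy.
  destruct (Rtotal_order y2 (1/2)) as [lt|[eq|gt]].
  - rewrite Psi_lower by auto. apply NL; [split|]; simpl; lra.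
  - subst; rewrite Psi_midline; simpl. rewrite !Rminus_diag, Rabs_R0; lra.
  - rewrite Psi_upper by auto; simpl.
    destruct (NL (y1, 1 - y2)) as [N1 N2]; [split; simpl; lra|simpl; lra|].
    split; auto. replace (1 - snd (Psi_low h h1 delta (y1, 1 - y2)) - 1/2)
      with (- (snd (Psi_low h h1 delta (y1, 1 - y2)) - 1/2)) by field.
    rewrite Rabs_Ropp; auto.
Qed.

Lemma cont2_Psi_midline x : in_square x -> snd x = 1/2 ->
  cont2 in_square (fun q => fst (Psi h h1 delta q)) x /\
  cont2 in_square (fun q => snd (Psi h h1 delta q)) x.
Proof.
  destruct x as [x1 x2]; simpl; intros Sx ->.
  assert (Hd : Rabs delta <= 1) by (apply Rabs_le; lra).
  split; intros e He; rewrite Psi_midline; simpl;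
    destruct (Psi_near_midline (e / 2) ltac:(lra)) as [d [Hd' NL]];
    apply (near2_impl _ _ (fun q => Rabs (fst q - x1) < Rmin d (e / 6) /\ Rabs (snd q - 1/2) < Rmin d (e / 6)));
    try (apply near2_ball, Rmin_pos; lra);
    intros q Sq [A B]; pose proof (Rmin_l d (e / 6)); pose proof (Rmin_r d (e / 6));
    destruct (NL q Sq ltac:(lra)) as [N1 N2]; [|lra].
  pose proof (bend_lipschitz delta 0 1 (fst q) x1 Hd).
  pose proof (Rabs_triang (fst (Psi h h1 delta q) - bend delta 0 1 (fst q))
                          (bend delta 0 1 (fst q) - bend delta 0 1 x1)) as Tr.
  replace (fst (Psi h h1 delta q) - bend delta 0 1 (fst q) + (bend delta 0 1 (fst q) - bend delta 0 1 x1))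
    with (fst (Psi h h1 delta q) - bend delta 0 1 x1) in Tr by ring.
  lra.
Qed.

Lemma cont2_Psi x : in_square x ->
  cont2 in_square (fun q => fst (Psi h h1 delta q)) x /\
  cont2 in_square (fun q => snd (Psi h h1 delta q)) x.
Proof.
  intros Sx. destruct (Rtotal_order (snd x) (1/2)) as [lt|[eq|gt]].
  - apply cont2_Psi_lower; auto.
  - apply cont2_Psi_midline; auto.
  - apply cont2_Psi_upper; auto.
Qed.

End StandingAssumptions.

Theorem lemma2p2 (h h1 h2 h3 : R -> R) (delta : R) :
  h_hyp h h1 h2 h3 -> -1 < delta < 1 ->
  continuous_on2 (Psi h h1 delta) in_square.
Proof.
  intros Hh Hdelta x Sx e He.
  destruct (cont2_Psi h h1 h2 h3 Hh delta Hdelta x Sx) as [C1 C2].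
  exact (near2_and _ _ _ _ (C1 e He) (C2 e He)).
Qed.
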